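(* Let $\mathscr M\subset ba(\mathcal A)$ and $\mathcal L(\mathscr M)=\{\nu\in ba(\mathcal A):\nu\ll m\text{ for some }m\in\mathbf A(\mathscr M)\}$. Then $\mathcal L(\mathscr M)=(\mathscr M^\perp)^\perp$, where for $\mathscr N\subset ba(\mathcal A)$, $\mathscr N^\perp=\{\nu\in ba(\mathcal A):\nu\perp\mu\text{ for all }\mu\in\mathscr N\}$.
   Context: $\Omega$ is a set, $\mathcal A$ an algebra of subsets of $\Omega$, $ba(\mathcal A)$ the Banach lattice of bounded finitely additive real set functions on $\mathcal A$ with norm $\|\mu\|=|\mu|(\Omega)$, $|\mu|$ the total variation. For $\lambda,\mu\in ba(\mathcal A)$: $\mu\ll\lambda$ means for every $\varepsilon>0$ there is $\delta>0$ with $|\lambda|(A)<\delta\Rightarrow|\mu|(A)<\varepsilon$; $\mu\perp\lambda$ means for every $\varepsilon>0$ there is $A\in\mathcal A$ with $|\mu|(A)+|\lambda|(A^c)<\varepsilon$. $\mathbf A(\mathscr M)=\{\sum_n\alpha_n\frac{|\mu_n|}{1\vee\|\mu_n\|}:\mu_n\in\mathscr M,\ \alpha_n\ge0,\ \sum_n\alpha_n=1\}$. *)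

From Stdlib Require Import Reals Lra List Classical ClassicalEpsilon.
Open Scope R_scope.

Set Implicit Arguments.
Section BA.
Variable Omega : Type.
(* Subsets of Omega are predicates; a set function maps subsets to reals
   (only its values on the algebra matter). *)
Definition set := Omega -> Prop.
Definition setfun := set -> R.

Definition setT : set := fun _ => True.
Definition setC (A : set) : set := fun x => ~ A x.
Definition setU (A B : set) : set := fun x => A x \/ B x.
Definition disj (A B : set) : Prop := forall x, A x -> B x -> False.

Record is_algebra (alg : set -> Prop) : Prop := {
  alg_T : alg setT;
  alg_C : forall A, alg A -> alg (setC A);
  alg_U : forall A B, alg A -> alg B -> alg (setU A B)
}.

Variable alg : set -> Prop.

Definition is_ba (mu : setfun) : Prop :=
  (forall A B, alg A -> alg B -> disj A B -> mu (setU A B) = mu A + mu B) /\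
  (exists K, forall A, alg A -> Rabs (mu A) <= K).

Definition partition_sums (mu : setfun) (A : set) (s : R) : Prop :=
  exists l : list set,
    Forall alg l /\ ForallOrdPairs disj l /\
    (forall x, A x <-> exists B, In B l /\ B x) /\
    s = fold_right (fun B acc => Rabs (mu B) + acc) 0 l.

Definition tv (mu : setfun) (A : set) : R :=
  epsilon (inhabits 0) (fun v => is_lub (partition_sums mu A) v).

Definition ba_norm (mu : setfun) : R := tv mu setT.

Definition abs_cont (mu lam : setfun) : Prop :=
  forall eps, 0 < eps -> exists delta, 0 < delta /\
    forall A, alg A -> tv lam A < delta -> tv mu A < eps.

Definition singular (mu lam : setfun) : Prop :=
  forall eps, 0 < eps -> exists A, alg A /\ tv mu A + tv lam (setC A) < eps.

Definition convA (M : setfun -> Prop) (m : setfun) : Prop :=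
  exists (mus : nat -> setfun) (alpha : nat -> R),
    (forall n, M (mus n)) /\ (forall n, 0 <= alpha n) /\
    infinite_sum alpha 1 /\
    forall A, alg A ->
      infinite_sum (fun n => alpha n * tv (mus n) A / Rmax 1 (ba_norm (mus n))) (m A).

Definition Lset (M : setfun -> Prop) (nu : setfun) : Prop :=
  is_ba nu /\ exists m, convA M m /\ abs_cont nu m.

Definition perp (N : setfun -> Prop) (nu : setfun) : Prop :=
  is_ba nu /\ forall mu, N mu -> singular nu mu.

End BA.

(* Let nu << m with m = sum_n alpha_n |mu_n| / (1 v ||mu_n||)
   and let lam be singular to every mu in M.  Finitely many singularities give a set B with
   |lam|(B^c) small and |mu_n|(B) small for the first K indices; the tail of the weights makes
   m(B) small, hence |nu|(B) small, so nu and lam are singular.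

   Put rho = |nu|.  For a nonnegative charge w the limit
   sing_part rho w = lim_n (rho - n w)^+ is the part of rho singular to w: it is singular to w,
   and if it vanishes then rho << w.  Let gamma be the infimum over finite families F in M and
   k in N of the defect (rho - k |F|)^+(Omega), enumerate a minimizing sequence of families by
   one sequence mu_n, and let m = sum_n 2^-(n+1) |mu_n| / (1 v ||mu_n||), a member of A(M).
   Then sing_part rho m has mass <= gamma, while adding any |mu|, mu in M, cannot push the mass
   below gamma; so sing_part rho m = sing_part rho (m + |mu|) is singular to every mu in M.
   Being in M^perp it is singular to nu, and since it lies below |nu| it vanishes; thus nu << m. *)

From Stdlib Require Import Reals List Classical ClassicalEpsilon Lra Psatz Arith.Cantor
  FunctionalExtensionality PropExtensionality.
Open Scope R_scope.

Lemma le_eps a b : (forall eta, 0 < eta -> a - eta <= b) -> a <= b.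
Proof. intros H; apply Rnot_lt_le; intro; specialize (H ((a - b) / 2)); lra. Qed.

Lemma lub_le E v c : is_lub E v -> (forall s, E s -> s <= c) -> v <= c.
Proof. intros [_ H] Hc; apply H; exact Hc. Qed.

Lemma lub_approx E v eps : is_lub E v -> 0 < eps -> exists s, E s /\ v - eps < s.
Proof.
  intros Hv He; apply NNPP; intro Hn.
  assert (v <= v - eps); [|lra].
  apply (lub_le _ _ _ Hv); intros s Hs; apply Rnot_lt_le; intro; apply Hn; eauto.
Qed.

Lemma lub_add_le E F a b c : is_lub E a -> is_lub F b ->
  (forall s t, E s -> F t -> s + t <= c) -> a + b <= c.
Proof.
  intros Ha Hb H.
  assert (b <= c - a); [|lra].
  apply (lub_le _ _ _ Hb); intros t Ht.
  assert (a <= c - t); [apply (lub_le _ _ _ Ha); intros s Hs; specialize (H s t Hs Ht); lra | lra].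
Qed.

Lemma cv_le_ev u l c N : Un_cv u l -> (forall n, (n >= N)%nat -> u n <= c) -> l <= c.
Proof.
  intros Hu H; apply Rnot_lt_le; intro Hlt.
  destruct (Hu (l - c)) as [N1 HN1]; [lra|].
  specialize (HN1 (max N N1) (Nat.le_max_r _ _)); specialize (H (max N N1) (Nat.le_max_l _ _)).
  apply Rabs_def2 in HN1; lra.
Qed.

Lemma cv_ge_ev u l c N : Un_cv u l -> (forall n, (n >= N)%nat -> c <= u n) -> c <= l.
Proof.
  intros Hu H; apply Rnot_lt_le; intro Hlt.
  destruct (Hu (c - l)) as [N1 HN1]; [lra|].
  specialize (HN1 (max N N1) (Nat.le_max_r _ _)); specialize (H (max N N1) (Nat.le_max_l _ _)).
  apply Rabs_def2 in HN1; lra.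
Qed.

(* the sum of the first N terms (unlike sum_f_R0, which sums N + 1 terms) *)
Fixpoint fsum (f : nat -> R) (N : nat) : R :=
  match N with O => 0 | S N' => fsum f N' + f N' end.

Lemma sum_fsum f M : sum_f_R0 f M = fsum f (S M).
Proof. induction M; simpl; [ring | rewrite IHM; simpl; ring]. Qed.

Lemma fsum_le f g N : (forall n, f n <= g n) -> fsum f N <= fsum g N.
Proof. intro H; induction N; simpl; [lra|]; specialize (H N); lra. Qed.

Lemma fsum_bound f K c : (forall n, (n < K)%nat -> f n <= c) -> fsum f K <= INR K * c.
Proof.
  induction K; intros H; [simpl; lra|]; rewrite S_INR; simpl.
  assert (fsum f K <= INR K * c) by (apply IHK; intros; apply H; auto).
  specialize (H K (Nat.lt_succ_diag_r _)); lra.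
Qed.

Lemma fsum_diff_antitone f g N M : (forall n, f n <= g n) -> (N <= M)%nat ->
  fsum f M - fsum g M <= fsum f N - fsum g N.
Proof. intros Hf H; induction H; [lra|]; simpl; specialize (Hf m); lra. Qed.

Lemma series_partial_le f l N : (forall n, 0 <= f n) -> infinite_sum f l -> fsum f N <= l.
Proof.
  intros Hf Hl; apply (cv_ge_ev _ _ _ N Hl); intros M HM; rewrite sum_fsum.
  pose proof (fsum_diff_antitone (fun _ => 0) f N (S M) Hf (Nat.le_le_succ_r _ _ HM)).
  assert (Z : forall K, fsum (fun _ => 0) K = 0) by (induction K; simpl; auto; lra).
  rewrite !Z in H; lra.
Qed.

Lemma series_term_le f l n : (forall n, 0 <= f n) -> infinite_sum f l -> f n <= l.
Proof.
  intros Hf Hl; pose proof (series_partial_le f l (S n) Hf Hl); simpl in H.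
  pose proof (series_partial_le f l n Hf Hl); pose proof (Hf n).
  assert (0 <= fsum f n) by (clear H H0; induction n; simpl; [lra|]; specialize (Hf n); lra).
  lra.
Qed.

Lemma series_nonneg f l : (forall n, 0 <= f n) -> infinite_sum f l -> 0 <= l.
Proof. intros Hf Hl; apply (series_partial_le f l 0 Hf Hl). Qed.

Lemma series_le f g lf lg : (forall n, f n <= g n) -> infinite_sum f lf -> infinite_sum g lg -> lf <= lg.
Proof. intros H Hf Hg; eapply Rle_cv_lim; [|exact Hf | exact Hg]; intro n; apply sum_Rle; auto. Qed.

Lemma series_add f g lf lg : infinite_sum f lf -> infinite_sum g lg ->
  infinite_sum (fun n => f n + g n) (lf + lg).
Proof.
  intros Hf Hg e He; destruct (CV_plus _ _ _ _ Hf Hg e He) as [N HN].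
  exists N; intros n Hn; rewrite sum_plus; apply HN; auto.
Qed.

Lemma series_unique f l1 l2 : infinite_sum f l1 -> infinite_sum f l2 -> l1 = l2.
Proof. apply UL_sequence. Qed.

Lemma series_tail_le f g lf lg N : (forall n, f n <= g n) -> infinite_sum f lf -> infinite_sum g lg ->
  lf <= fsum f N + (lg - fsum g N).
Proof.
  intros Hfg Hf Hg.
  assert (lf - lg <= fsum f N - fsum g N); [|lra].
  apply (cv_le_ev _ _ _ N (CV_minus _ _ _ _ Hf Hg)); intros M HM; rewrite !sum_fsum.
  apply fsum_diff_antitone; auto.
Qed.

Lemma series_tail_small f l eps : infinite_sum f l -> 0 < eps -> exists K, l - fsum f K < eps.
Proof.
  intros Hf He; destruct (Hf eps He) as [N HN]; specialize (HN N (Nat.le_refl _)).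
  exists (S N); rewrite sum_fsum in HN; apply Rabs_def2 in HN; lra.
Qed.

Definition geo (n : nat) : R := (/ 2) ^ (S n).

Lemma geo_pos n : 0 < geo n.
Proof. apply pow_lt; lra. Qed.

Lemma geo_nonneg n : 0 <= geo n.
Proof. left; apply geo_pos. Qed.

Lemma geo_sum : infinite_sum geo 1.
Proof.
  assert (F : forall N, fsum geo N = 1 - (/ 2) ^ N)
    by (induction N; simpl; [ring | rewrite IHN; unfold geo; simpl; field]).
  intros e He; destruct (pow_lt_1_zero (/ 2)) with (y := e) as [N HN]; auto.
  { rewrite Rabs_right by lra; lra. }
  exists N; intros n Hn; rewrite sum_fsum, F; unfold Rdist.
  replace (1 - (/ 2) ^ S n - 1) with (- ((/ 2) ^ S n)) by ring; rewrite Rabs_Ropp; apply HN; auto.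
Qed.

Lemma inf_approx (E : R -> Prop) : (exists x, E x) -> (forall x, E x -> 0 <= x) ->
  exists g, (forall x, E x -> g <= x) /\ forall eta, 0 < eta -> exists x, E x /\ x < g + eta.
Proof.
  intros [x0 Hx0] Hnn.
  destruct (completeness (fun r => E (- r))) as [s Hs].
  - exists 0; intros r Hr; specialize (Hnn _ Hr); lra.
  - exists (- x0); rewrite Ropp_involutive; auto.
  - exists (- s); split.
    + intros x Hx; assert (- x <= s) by (apply (proj1 Hs); rewrite Ropp_involutive; auto); lra.
    + intros eta He; destruct (lub_approx _ _ eta Hs He) as [r [Hr Hlt]].
      exists (- r); split; auto; lra.
Qed.

Lemma enum_lists {X} (P : X -> Prop) (x0 : X) (Fs : nat -> list X) :
  P x0 -> (forall j, Forall P (Fs j)) ->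
  exists xs : nat -> X, (forall n, P (xs n)) /\ forall j x, In x (Fs j) -> exists n, xs n = x.
Proof.
  intros H0 HF.
  exists (fun n => let (j, i) := Cantor.of_nat n in nth i (Fs j) x0); split.
  - intro n; destruct (Cantor.of_nat n) as [j i].
    destruct (Nat.lt_ge_cases i (length (Fs j))).
    + specialize (HF j); rewrite Forall_forall in HF; apply HF, nth_In; auto.
    + rewrite nth_overflow; auto.
  - intros j x Hin; destruct (In_nth _ _ x0 Hin) as [i [_ Hi]].
    exists (Cantor.to_nat (j, i)); rewrite Cantor.cancel_of_to; auto.
Qed.

Section BoundedCharges.
Variable Omega : Type.
Variable alg : set Omega -> Prop.
Hypothesis Halg : is_algebra alg.

Local Notation whole := (@setT Omega).

Lemma set_ext (A B : set Omega) : (forall x, A x <-> B x) -> A = B.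
Proof.
  intro H; apply functional_extensionality; intro x; apply propositional_extensionality; auto.
Qed.

Definition setI (A B : set Omega) : set Omega := fun x => A x /\ B x.
Definition setD (A B : set Omega) : set Omega := setI A (setC B).
Definition set0 : set Omega := setC whole.
Definition subset (A B : set Omega) : Prop := forall x, A x -> B x.
Definition Ul (l : list (set Omega)) : set Omega := fun x => exists B, In B l /\ B x.

Lemma algT : alg whole.
Proof. exact (alg_T Halg). Qed.

Lemma algC A : alg A -> alg (setC A).
Proof. exact (alg_C Halg A). Qed.

Lemma algU A B : alg A -> alg B -> alg (setU A B).
Proof. exact (alg_U Halg A B). Qed.

Lemma alg0 : alg set0.
Proof. exact (algC _ algT). Qed.

Lemma setCC (A : set Omega) : setC (setC A) = A.
Proof. apply set_ext; intro x; unfold setC; split; [apply NNPP | tauto]. Qed.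

Lemma algI A B : alg A -> alg B -> alg (setI A B).
Proof.
  intros HA HB.
  replace (setI A B) with (setC (setU (setC A) (setC B))) by
    (apply set_ext; intro x; unfold setC, setU, setI; split; [intro H; split; apply NNPP|]; tauto).
  auto using algC, algU.
Qed.

Lemma algD A B : alg A -> alg B -> alg (setD A B).
Proof. intros; apply algI; auto using algC. Qed.

Lemma Ul_nil : Ul nil = set0.
Proof. apply set_ext; intro x; unfold Ul, set0, setC, setT; simpl; firstorder. Qed.

Lemma Ul_cons B l : Ul (B :: l) = setU B (Ul l).
Proof. apply set_ext; intro x; unfold Ul, setU; simpl; firstorder congruence. Qed.

Lemma Ul_app l1 l2 : Ul (l1 ++ l2) = setU (Ul l1) (Ul l2).
Proof.
  apply set_ext; intro x; unfold Ul, setU; split.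
  - intros [B [HB Bx]]; apply in_app_or in HB as [HB | HB]; eauto.
  - intros [[B [HB Bx]] | [B [HB Bx]]]; exists B; auto using in_or_app.
Qed.

Lemma alg_Ul l : Forall alg l -> alg (Ul l).
Proof. induction 1; [rewrite Ul_nil; apply alg0 | rewrite Ul_cons; auto using algU]. Qed.

Lemma disj_Ul B l : Forall (disj B) l -> disj B (Ul l).
Proof. intros H x Bx [C [HC Cx]]; rewrite Forall_forall in H; exact (H C HC x Bx Cx). Qed.

Lemma disj_C (C : set Omega) : disj C (setC C).
Proof. intros x a b; auto. Qed.

Lemma setT_split (C : set Omega) : whole = setU C (setC C).
Proof. apply set_ext; intro x; unfold setT, setU, setC; split; [intros _; apply classic | auto]. Qed.

Lemma setU_setD (A B : set Omega) : subset B A -> A = setU B (setD A B).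
Proof.
  intro H; apply set_ext; intro x; unfold setU, setD, setI, setC; split; [|firstorder].
  intro Ax; destruct (classic (B x)); tauto.
Qed.

Lemma disj_D (A B : set Omega) : disj B (setD A B).
Proof. intros x a [_ b]; auto. Qed.

Definition additive (mu : setfun Omega) : Prop :=
  forall A B, alg A -> alg B -> disj A B -> mu (setU A B) = mu A + mu B.

Lemma ba_additive mu : is_ba alg mu -> additive mu.
Proof. intros [H _]; exact H. Qed.

Lemma additive_set0 mu : additive mu -> mu set0 = 0.
Proof.
  intro H. assert (E : setU set0 set0 = set0) by
    (apply set_ext; intro x; unfold setU, set0, setC, setT; tauto).
  pose proof (H set0 set0 alg0 alg0) as HU; rewrite E in HU.
  assert (disj set0 set0) by (intros x a; unfold set0, setC, setT in a; tauto).
  specialize (HU H0); lra.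
Qed.

Lemma additive_compl mu C : additive mu -> alg C -> mu whole = mu C + mu (setC C).
Proof. intros H HC; rewrite (setT_split C) at 1; apply H; auto using algC, disj_C. Qed.

Definition sumv (mu : setfun Omega) (l : list (set Omega)) : R :=
  fold_right (fun B acc => mu B + acc) 0 l.
Definition sumabs (mu : setfun Omega) (l : list (set Omega)) : R :=
  fold_right (fun B acc => Rabs (mu B) + acc) 0 l.

Lemma additive_list mu l : additive mu -> Forall alg l -> ForallOrdPairs (@disj Omega) l ->
  mu (Ul l) = sumv mu l.
Proof.
  intros Hmu; induction l as [|B l IH]; intros HF HD.
  - rewrite Ul_nil; apply additive_set0; auto.
  - inversion HF; inversion HD; subst; rewrite Ul_cons; simpl.
    rewrite Hmu, IH; auto using alg_Ul, disj_Ul.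
Qed.

(** * Total variation *)

Definition partl (A : set Omega) (l : list (set Omega)) : Prop :=
  Forall alg l /\ ForallOrdPairs (@disj Omega) l /\ A = Ul l.

Lemma partition_sums_iff mu A s :
  partition_sums alg mu A s <-> exists l, partl A l /\ s = sumabs mu l.
Proof.
  split.
  - intros [l [H1 [H2 [H3 H4]]]]; exists l; repeat split; auto; apply set_ext; auto.
  - intros [l [[H1 [H2 H3]] H4]]; exists l; repeat split; auto; subst A; auto.
Qed.

Lemma partl_single A : alg A -> partl A (A :: nil).
Proof.
  intro HA; repeat constructor; auto.
  apply set_ext; intro x; unfold Ul; simpl; firstorder congruence.
Qed.

Lemma FOP_app {X} (Rl : X -> X -> Prop) l1 l2 : ForallOrdPairs Rl l1 -> ForallOrdPairs Rl l2 ->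
  (forall x y, In x l1 -> In y l2 -> Rl x y) -> ForallOrdPairs Rl (l1 ++ l2).
Proof.
  intros H1; induction H1 as [|a l Ha Hl IH]; intros H2 H; simpl; auto.
  constructor.
  - apply Forall_app; split; auto; rewrite Forall_forall; intros; apply H; simpl; auto.
  - apply IH; auto; intros; apply H; simpl; auto.
Qed.

Lemma partl_app A B lA lB : disj A B -> partl A lA -> partl B lB -> partl (setU A B) (lA ++ lB).
Proof.
  intros HD [a1 [a2 a3]] [b1 [b2 b3]]; split; [|split].
  - apply Forall_app; auto.
  - apply FOP_app; auto; intros C D HC HDb x Cx Dx.
    apply (HD x); [rewrite a3; exists C | rewrite b3; exists D]; auto.
  - rewrite Ul_app, <- a3, <- b3; auto.
Qed.

Definition posb (mu : setfun Omega) (B : set Omega) : bool :=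
  if Rle_dec 0 (mu B) then true else false.

Lemma sign_split mu l : sumabs mu l + sumv mu l = 2 * sumv mu (filter (posb mu) l).
Proof.
  induction l as [|B l IH]; simpl; [lra|].
  unfold posb at 1; destruct (Rle_dec 0 (mu B)); simpl.
  - rewrite Rabs_right by lra; lra.
  - rewrite Rabs_left by lra; lra.
Qed.

Lemma Forall_filter_sub {X} (P : X -> Prop) f l : Forall P l -> Forall P (filter f l).
Proof. induction 1; simpl; auto; destruct (f x); auto. Qed.

Lemma FOP_filter {X} (Rl : X -> X -> Prop) f l : ForallOrdPairs Rl l -> ForallOrdPairs Rl (filter f l).
Proof.
  induction 1; simpl; [constructor|]; destruct (f a); auto; constructor; auto.
  apply Forall_filter_sub; auto.
Qed.

(* a partition sum is the value of the positive cells minus that of the negative ones *)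
Lemma sumabs_union_pos mu A l : additive mu -> partl A l ->
  sumabs mu l = 2 * mu (Ul (filter (posb mu) l)) - mu A.
Proof.
  intros Ha [H1 [H2 ->]]; pose proof (sign_split mu l).
  rewrite !additive_list; auto using Forall_filter_sub, FOP_filter; lra.
Qed.

Lemma tv_spec mu A : is_ba alg mu -> alg A -> is_lub (partition_sums alg mu A) (tv alg mu A).
Proof.
  intros [Ha [K HK]] HA; unfold tv; apply epsilon_spec.
  destruct (completeness (partition_sums alg mu A)) as [v Hv]; [| |exists v; auto].
  - exists (3 * K); intros s Hs; apply partition_sums_iff in Hs as [l [Hl ->]].
    rewrite (sumabs_union_pos mu A l Ha Hl).
    destruct Hl as [H1 _]; pose proof (HK _ HA) as KA.
    pose proof (HK _ (alg_Ul _ (Forall_filter_sub _ (posb mu) _ H1))) as KP.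
    unfold Rabs in KA, KP; destruct (Rcase_abs (mu A)), (Rcase_abs (mu (Ul (filter (posb mu) l)))); lra.
  - exists (Rabs (mu A) + 0); apply partition_sums_iff; eauto using partl_single.
Qed.

Lemma tv_ge mu A : is_ba alg mu -> alg A -> Rabs (mu A) <= tv alg mu A.
Proof.
  intros Hb HA; apply (tv_spec mu A Hb HA), partition_sums_iff.
  exists (A :: nil); split; [apply partl_single; auto | simpl; ring].
Qed.

Lemma tv_nonneg mu A : is_ba alg mu -> alg A -> 0 <= tv alg mu A.
Proof. intros; eapply Rle_trans; [apply Rabs_pos | apply tv_ge; auto]. Qed.

Lemma FOP_map {X Y} (Rx : X -> X -> Prop) (Ry : Y -> Y -> Prop) (f : X -> Y) l :
  ForallOrdPairs Rx l -> (forall x y, Rx x y -> Ry (f x) (f y)) -> ForallOrdPairs Ry (map f l).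
Proof.
  intros H1 H; induction H1 as [|a l Ha Hl IH]; simpl; constructor; auto.
  apply Forall_map; eapply Forall_impl; [|exact Ha]; auto.
Qed.

Lemma partl_trace X Y l : partl X l -> alg Y -> subset Y X -> partl Y (map (fun C => setI C Y) l).
Proof.
  intros [H1 [H2 H3]] HY HYX; split; [|split].
  - apply Forall_map; eapply Forall_impl; [|exact H1]; intros; apply algI; auto.
  - eapply FOP_map; eauto; intros C D HCD x [Cx _] [Dx _]; eapply HCD; eauto.
  - apply set_ext; intro x; split.
    + intro Yx; assert (Ul l x) as [C [HC Cx]] by (rewrite <- H3; auto).
      exists (setI C Y); split; [apply (in_map (fun C => setI C Y)) | split]; auto.
    + intros [D [HD Dx]]; apply in_map_iff in HD as [C [<- _]]; apply Dx.
Qed.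

Lemma sumabs_refine mu A B l : additive mu -> alg A -> alg B -> disj A B -> Forall alg l ->
  (forall C, In C l -> subset C (setU A B)) ->
  sumabs mu l <= sumabs mu (map (fun C => setI C A) l) + sumabs mu (map (fun C => setI C B) l).
Proof.
  intros Hmu HA HB HD; induction 1 as [|C l HC Hl IH]; intros Hsub; simpl; [lra|].
  assert (E : mu C = mu (setI C A) + mu (setI C B)).
  { replace C with (setU (setI C A) (setI C B)) at 1.
    - apply Hmu; try apply algI; auto; intros x [_ a] [_ b]; eapply HD; eauto.
    - apply set_ext; intro x; unfold setU, setI; split; [tauto|].
      intro Cx; destruct (Hsub C (or_introl eq_refl) x Cx); tauto. }
  rewrite E; pose proof (Rabs_triang (mu (setI C A)) (mu (setI C B))).
  assert (IH' := IH (fun D HD' => Hsub D (or_intror HD'))); lra.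
Qed.

Lemma sumabs_app mu l1 l2 : sumabs mu (l1 ++ l2) = sumabs mu l1 + sumabs mu l2.
Proof. induction l1; simpl; [ring | rewrite IHl1; ring]. Qed.

Lemma tv_add mu A B : is_ba alg mu -> alg A -> alg B -> disj A B ->
  tv alg mu (setU A B) = tv alg mu A + tv alg mu B.
Proof.
  intros Hb HA HB HD.
  pose proof (tv_spec mu A Hb HA) as SA; pose proof (tv_spec mu B Hb HB) as SB.
  pose proof (tv_spec mu _ Hb (algU _ _ HA HB)) as SAB.
  apply Rle_antisym.
  - apply (lub_le _ _ _ SAB); intros s Hs; apply partition_sums_iff in Hs as [l [Hl ->]].
    assert (Hsub : forall C, In C l -> subset C (setU A B)).
    { intros C HC x Cx; destruct Hl as [_ [_ ->]]; exists C; auto. }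
    pose proof (sumabs_refine mu A B l (ba_additive _ Hb) HA HB HD (proj1 Hl) Hsub).
    assert (PA : partl A (map (fun C => setI C A) l))
      by (apply (partl_trace (setU A B)); auto; intros x; unfold setU; auto).
    assert (PB : partl B (map (fun C => setI C B) l))
      by (apply (partl_trace (setU A B)); auto; intros x; unfold setU; auto).
    assert (sumabs mu (map (fun C => setI C A) l) <= tv alg mu A)
      by (apply (proj1 SA), partition_sums_iff; eauto).
    assert (sumabs mu (map (fun C => setI C B) l) <= tv alg mu B)
      by (apply (proj1 SB), partition_sums_iff; eauto).
    lra.
  - apply (lub_add_le _ _ _ _ _ SA SB); intros s t Hs Ht.
    apply partition_sums_iff in Hs as [lA [HlA ->]]; apply partition_sums_iff in Ht as [lB [HlB ->]].
    rewrite <- sumabs_app; apply (proj1 SAB), partition_sums_iff; eauto using partl_app.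
Qed.

Lemma tv_mono mu A B : is_ba alg mu -> alg A -> alg B -> subset B A -> tv alg mu B <= tv alg mu A.
Proof.
  intros Hb HA HB Hs; rewrite (setU_setD A B Hs), tv_add; auto using algD, disj_D.
  pose proof (tv_nonneg mu _ Hb (algD A B HA HB)); lra.
Qed.

Lemma tv_set0 mu : is_ba alg mu -> tv alg mu set0 = 0.
Proof.
  intro Hb; apply additive_set0; intros A B HA HB HD; apply tv_add; auto.
Qed.

Lemma tv_subadd mu X Y : is_ba alg mu -> alg X -> alg Y ->
  tv alg mu (setU X Y) <= tv alg mu X + tv alg mu Y.
Proof.
  intros Hb HX HY.
  replace (setU X Y) with (setU X (setD Y X)).
  - rewrite tv_add; auto using algD; [|intros x a [_ b]; auto].
    assert (tv alg mu (setD Y X) <= tv alg mu Y)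
      by (apply tv_mono; auto using algD; intros x [a _]; auto).
    lra.
  - apply set_ext; intro x; unfold setU, setD, setI, setC; split; [tauto|].
    intros [a | b]; [auto|]; destruct (classic (X x)); auto.
Qed.

Definition nonneg_ba (w : setfun Omega) : Prop := is_ba alg w /\ forall A, alg A -> 0 <= w A.

Lemma ba_sub mu nu : is_ba alg mu -> is_ba alg nu -> is_ba alg (fun C => mu C - nu C).
Proof.
  intros [a1 [K1 b1]] [a2 [K2 b2]]; split.
  - intros; rewrite a1, a2; auto; ring.
  - exists (K1 + K2); intros C HC; specialize (b1 C HC); specialize (b2 C HC).
    unfold Rminus; eapply Rle_trans; [apply Rabs_triang|]; rewrite Rabs_Ropp; lra.
Qed.

Lemma ba_scale w t : is_ba alg w -> is_ba alg (fun C => t * w C).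
Proof.
  intros [a [K b]]; split.
  - intros; rewrite a; auto; ring.
  - exists (Rabs t * K); intros C HC; rewrite Rabs_mult.
    apply Rmult_le_compat_l; auto using Rabs_pos.
Qed.

Lemma nonneg_ba_scale w t : nonneg_ba w -> 0 <= t -> nonneg_ba (fun C => t * w C).
Proof. intros [Hb Hn] Ht; split; [apply ba_scale; auto | intros; apply Rmult_le_pos; auto]. Qed.

Lemma nonneg_ba_plus a b : nonneg_ba a -> nonneg_ba b -> nonneg_ba (fun A => a A + b A).
Proof.
  intros [Ha n1] [Hb n2]; split; [|intros A HA; specialize (n1 A HA); specialize (n2 A HA); lra].
  replace (fun A => a A + b A) with (fun A => a A - (fun C => -1 * b C) A)
    by (apply functional_extensionality; intro; ring).
  apply ba_sub, ba_scale; auto.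
Qed.

Lemma nonneg_le_whole w C : nonneg_ba w -> alg C -> w C <= w whole.
Proof.
  intros [Hb Hn] HC; rewrite (additive_compl w C (ba_additive _ Hb) HC).
  pose proof (Hn _ (algC C HC)); lra.
Qed.

Lemma nonneg_eq_of_le a b A : additive a -> additive b -> (forall C, alg C -> a C <= b C) ->
  b whole <= a whole -> alg A -> a A = b A.
Proof.
  intros Ha Hb Hle Hw HA.
  rewrite (additive_compl a A Ha HA), (additive_compl b A Hb HA) in Hw.
  pose proof (Hle A HA); pose proof (Hle _ (algC A HA)); lra.
Qed.

Lemma tv_nonneg_ba mu : is_ba alg mu -> nonneg_ba (tv alg mu).
Proof.
  intros Hb; split; [split|].
  - intros; apply tv_add; auto.
  - exists (tv alg mu whole); intros A HA; rewrite Rabs_right by (apply Rle_ge, tv_nonneg; auto).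
    apply tv_mono; auto using algT; intros x _; exact I.
  - intros; apply tv_nonneg; auto.
Qed.

Lemma tv_of_nonneg w A : nonneg_ba w -> alg A -> tv alg w A = w A.
Proof.
  intros [Hb Hn] HA; apply (is_lub_u _ _ _ (tv_spec w A Hb HA)); split.
  - intros s Hs; apply partition_sums_iff in Hs as [l [[H1 [H2 H3]] ->]].
    assert (E : sumabs w l = sumv w l).
    { clear H2 H3; induction H1; simpl; auto; rewrite IHForall, Rabs_right; auto; apply Rle_ge; auto. }
    rewrite E, H3, additive_list; auto using ba_additive; lra.
  - intros b Hb'; apply Hb', partition_sums_iff; exists (A :: nil); split; [apply partl_single; auto|].
    simpl; rewrite Rabs_right; [ring | apply Rle_ge; auto].
Qed.

Lemma tv_sub_le mu nu A : is_ba alg mu -> is_ba alg nu -> alg A ->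
  tv alg (fun C => mu C - nu C) A <= tv alg mu A + tv alg nu A.
Proof.
  intros Hmu Hnu HA.
  apply (lub_le _ _ _ (tv_spec _ A (ba_sub _ _ Hmu Hnu) HA)); intros s Hs.
  apply partition_sums_iff in Hs as [l [Hl ->]].
  assert (sumabs (fun C => mu C - nu C) l <= sumabs mu l + sumabs nu l).
  { clear Hl; induction l as [|B l IH]; simpl; [lra|].
    pose proof (Rabs_triang (mu B) (- nu B)); rewrite Rabs_Ropp in H; unfold Rminus at 1; lra. }
  assert (sumabs mu l <= tv alg mu A) by (apply (tv_spec mu A Hmu HA), partition_sums_iff; eauto).
  assert (sumabs nu l <= tv alg nu A) by (apply (tv_spec nu A Hnu HA), partition_sums_iff; eauto).
  lra.
Qed.

(** * The positive part of a charge *)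

Definition pos_part (sig : setfun Omega) (A : set Omega) : R := (tv alg sig A + sig A) / 2.

Lemma pos_part_additive sig : is_ba alg sig -> additive (pos_part sig).
Proof.
  intros Hb A B HA HB HD; unfold pos_part; rewrite tv_add, (ba_additive _ Hb); auto; field.
Qed.

Lemma pos_part_ge sig A : is_ba alg sig -> alg A -> sig A <= pos_part sig A.
Proof.
  intros Hb HA; unfold pos_part; pose proof (tv_ge sig A Hb HA); pose proof (RRle_abs (sig A)); lra.
Qed.

Lemma pos_part_nonneg sig A : is_ba alg sig -> alg A -> 0 <= pos_part sig A.
Proof.
  intros Hb HA; unfold pos_part; pose proof (tv_ge sig A Hb HA).
  pose proof (Rabs_pos (sig A)); pose proof (Rle_abs (- sig A)); rewrite Rabs_Ropp in H1; lra.
Qed.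

Lemma pos_part_of_nonneg w A : nonneg_ba w -> alg A -> pos_part w A = w A.
Proof. intros Hw HA; unfold pos_part; rewrite tv_of_nonneg; auto; field. Qed.

Lemma pos_part_sub_le sig sig' d A : is_ba alg sig -> nonneg_ba d -> alg A ->
  (forall C, sig' C = sig C - d C) -> pos_part sig' A <= pos_part sig A.
Proof.
  intros Hb Hd HA E.
  replace sig' with (fun C => sig C - d C) by (apply functional_extensionality; intro; auto).
  unfold pos_part; pose proof (tv_sub_le sig d A Hb (proj1 Hd) HA).
  rewrite (tv_of_nonneg d A Hd HA) in H; lra.
Qed.

Lemma pos_part_compl sig C : is_ba alg sig -> alg C ->
  pos_part sig (setC C) <= pos_part sig whole - sig C.
Proof.
  intros Hb HC; rewrite (additive_compl _ C (pos_part_additive _ Hb) HC).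
  pose proof (pos_part_ge sig C Hb HC); lra.
Qed.

Lemma pos_part_whole_ge sig C : is_ba alg sig -> alg C -> sig C <= pos_part sig whole.
Proof.
  intros Hb HC; pose proof (pos_part_compl sig C Hb HC).
  pose proof (pos_part_nonneg sig _ Hb (algC C HC)); lra.
Qed.

Lemma pos_part_approx sig eta : is_ba alg sig -> 0 < eta ->
  exists C, alg C /\ pos_part sig whole - eta < sig C.
Proof.
  intros Hb He.
  destruct (lub_approx _ _ (2 * eta) (tv_spec sig _ Hb algT)) as [s [Hs Hlt]]; [lra|].
  apply partition_sums_iff in Hs as [l [Hl ->]].
  exists (Ul (filter (posb sig) l)); split.
  - apply alg_Ul, Forall_filter_sub, (proj1 Hl).
  - rewrite (sumabs_union_pos sig whole l (ba_additive _ Hb) Hl) in Hlt; unfold pos_part; lra.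
Qed.

(** * The part of rho that is singular with respect to w *)

Section SingularPart.
Variables rho w : setfun Omega.
Hypothesis Hrho : nonneg_ba rho.
Hypothesis Hw : nonneg_ba w.

Definition shifted (t : R) : setfun Omega := fun C => rho C - t * w C.

Lemma shifted_ba t : is_ba alg (shifted t).
Proof. apply (ba_sub rho (fun C => t * w C)); [apply Hrho | apply ba_scale, Hw]. Qed.

Lemma pos_part_shifted_antitone t t' A : alg A -> t <= t' ->
  pos_part (shifted t') A <= pos_part (shifted t) A.
Proof.
  intros HA Ht; apply pos_part_sub_le with (d := fun C => (t' - t) * w C); auto using shifted_ba.
  - apply nonneg_ba_scale; auto; lra.
  - intros; unfold shifted; ring.
Qed.

Definition sing_part (A : set Omega) : R :=
  epsilon (inhabits 0) (fun l => Un_cv (fun n => pos_part (shifted (INR n)) A) l).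

Lemma sing_part_cv A : alg A -> Un_cv (fun n => pos_part (shifted (INR n)) A) (sing_part A).
Proof.
  intros HA; unfold sing_part; apply epsilon_spec.
  destruct (decreasing_cv (fun n => pos_part (shifted (INR n)) A)) as [l Hl]; [| |exists l; auto].
  - intro n; apply pos_part_shifted_antitone; auto; rewrite S_INR; lra.
  - exists 0; intros x [n ->]; unfold opp_seq.
    pose proof (pos_part_nonneg _ A (shifted_ba (INR n)) HA); lra.
Qed.

Lemma sing_part_le A t : alg A -> 0 <= t -> sing_part A <= pos_part (shifted t) A.
Proof.
  intros HA Ht; destruct (INR_unbounded t) as [n Hn].
  apply (cv_le_ev _ _ _ n (sing_part_cv A HA)); intros k Hk.
  apply pos_part_shifted_antitone; auto; apply Rge_le, Rle_ge; apply le_INR in Hk; lra.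
Qed.

Lemma sing_part_ge A c : alg A -> (forall n, c <= pos_part (shifted (INR n)) A) -> c <= sing_part A.
Proof. intros HA H; apply (cv_ge_ev _ _ _ 0 (sing_part_cv A HA)); auto. Qed.

Lemma sing_part_le_rho A : alg A -> sing_part A <= rho A.
Proof.
  intros HA; eapply Rle_trans; [apply (sing_part_le A 0); auto; lra|].
  rewrite <- (pos_part_of_nonneg rho A Hrho HA).
  apply pos_part_sub_le with (d := fun C => 0 * w C); [apply Hrho | | auto | reflexivity].
  apply nonneg_ba_scale; auto; lra.
Qed.

Lemma sing_part_nonneg_ba : nonneg_ba sing_part.
Proof.
  assert (Hnn : forall A, alg A -> 0 <= sing_part A)
    by (intros A HA; apply sing_part_ge; auto; intros; apply pos_part_nonneg; auto using shifted_ba).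
  split; [split|]; auto.
  - intros A B HA HB HD; apply (UL_sequence (fun n => pos_part (shifted (INR n)) (setU A B)));
      [apply sing_part_cv, algU; auto|].
    replace (fun n => pos_part (shifted (INR n)) (setU A B))
      with (fun n => pos_part (shifted (INR n)) A + pos_part (shifted (INR n)) B).
    + apply CV_plus; apply sing_part_cv; auto.
    + apply functional_extensionality; intro n; rewrite pos_part_additive; auto using shifted_ba.
  - destruct Hrho as [[_ [K HK]] _]; exists K; intros A HA.
    pose proof (Hnn A HA); pose proof (sing_part_le_rho A HA); pose proof (HK A HA).
    rewrite Rabs_right by lra; pose proof (Rle_abs (rho A)); lra.
Qed.

Lemma sing_part_singular eps : 0 < eps -> exists A, alg A /\ sing_part A + w (setC A) < eps.
Proof.
  intros He.
  destruct (INR_unbounded (2 * (rho whole + eps) / eps)) as [n Hn].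
  assert (Hr : 0 <= rho whole) by (apply Hrho, algT).
  assert (Hbig : rho whole + eps < INR n * (eps / 2)).
  { apply (Rmult_lt_compat_r (eps / 2)) in Hn; [|lra].
    replace (2 * (rho whole + eps) / eps * (eps / 2)) with (rho whole + eps) in Hn by (field; lra); lra. }
  destruct (pos_part_approx (shifted (INR n)) (eps / 2) (shifted_ba _)) as [C [HC HCs]]; [lra|].
  exists (setC C); split; [apply algC; auto|]; rewrite setCC.
  pose proof (sing_part_le (setC C) (INR n) (algC C HC) (pos_INR n)).
  pose proof (pos_part_compl (shifted (INR n)) C (shifted_ba _) HC).
  pose proof (pos_part_nonneg (shifted (INR n)) _ (shifted_ba _) algT).
  pose proof (nonneg_le_whole rho C Hrho HC).
  assert (w C < eps / 2).
  { assert (E : shifted (INR n) C = rho C - INR n * w C) by reflexivity.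
    apply Rnot_le_lt; intro Hle; pose proof (Rmult_le_compat_l _ _ _ (pos_INR n) Hle); lra. }
  lra.
Qed.

Lemma sing_part_null_abs_cont : sing_part whole <= 0 ->
  forall eps, 0 < eps -> exists delta, 0 < delta /\ forall A, alg A -> w A < delta -> rho A < eps.
Proof.
  intros H0 eps He.
  destruct (sing_part_cv _ algT (eps / 2)) as [N HN]; [lra|].
  specialize (HN (S N) (Nat.le_succ_diag_r _)); apply Rabs_def2 in HN.
  assert (Hn : 0 < INR (S N)) by (apply lt_0_INR; auto with arith).
  exists (eps / (2 * INR (S N))); split; [apply Rdiv_lt_0_compat; lra|].
  intros A HA HwA.
  pose proof (pos_part_whole_ge _ A (shifted_ba (INR (S N))) HA) as HP.
  change (shifted (INR (S N)) A) with (rho A - INR (S N) * w A) in HP.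
  apply (Rmult_lt_compat_l (INR (S N))) in HwA; auto.
  replace (INR (S N) * (eps / (2 * INR (S N)))) with (eps / 2) in HwA by (field; lra).
  lra.
Qed.

End SingularPart.

Lemma sing_part_antitone rho w d A : nonneg_ba rho -> nonneg_ba w -> nonneg_ba d -> alg A ->
  sing_part rho (fun C => w C + d C) A <= sing_part rho w A.
Proof.
  intros Hrho Hw Hd HA.
  assert (Hwd : nonneg_ba (fun C => w C + d C)) by (apply nonneg_ba_plus; auto).
  eapply Rle_cv_lim; [| apply sing_part_cv; auto | apply sing_part_cv; auto].
  intro n; apply (pos_part_sub_le _ _ (fun C => INR n * d C)); auto using shifted_ba.
  - apply nonneg_ba_scale; auto using pos_INR.
  - intro C; unfold shifted; ring.
Qed.

Definition aterm (mus : nat -> setfun Omega) (alpha : nat -> R) (A : set Omega) (n : nat) : R :=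
  alpha n * tv alg (mus n) A / Rmax 1 (ba_norm alg (mus n)).

Lemma tv_le_norm mu A : is_ba alg mu -> alg A -> tv alg mu A <= Rmax 1 (ba_norm alg mu).
Proof.
  intros Hb HA; eapply Rle_trans; [apply (tv_mono mu whole A Hb algT HA) | apply Rmax_r].
  intros x _; exact I.
Qed.

Section Mixture.
Variables (mus : nat -> setfun Omega) (alpha : nat -> R) (m : setfun Omega).
Hypothesis mus_ba : forall n, is_ba alg (mus n).
Hypothesis alpha_nonneg : forall n, 0 <= alpha n.
Hypothesis alpha_sum : infinite_sum alpha 1.
Hypothesis m_sum : forall A, alg A -> infinite_sum (aterm mus alpha A) (m A).

Lemma aterm_nonneg A : alg A -> forall n, 0 <= aterm mus alpha A n.
Proof.
  intros HA n; unfold aterm; pose proof (Rmax_l 1 (ba_norm alg (mus n))).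
  apply Rmult_le_pos; [apply Rmult_le_pos; auto using tv_nonneg | left; apply Rinv_0_lt_compat; lra].
Qed.

Lemma aterm_le_weight A : alg A -> forall n, aterm mus alpha A n <= alpha n.
Proof.
  intros HA n; unfold aterm; pose proof (Rmax_l 1 (ba_norm alg (mus n))).
  pose proof (tv_le_norm _ A (mus_ba n) HA); pose proof (tv_nonneg _ A (mus_ba n) HA).
  apply (Rmult_le_reg_r (Rmax 1 (ba_norm alg (mus n)))); [lra|].
  unfold Rdiv; rewrite Rmult_assoc, Rinv_l, Rmult_1_r by lra.
  apply Rmult_le_compat_l; auto.
Qed.

Lemma aterm_le_tv A : alg A -> forall n, aterm mus alpha A n <= tv alg (mus n) A.
Proof.
  intros HA n; unfold aterm; pose proof (Rmax_l 1 (ba_norm alg (mus n))).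
  pose proof (tv_nonneg _ A (mus_ba n) HA); pose proof (series_term_le alpha 1 n alpha_nonneg alpha_sum).
  apply (Rmult_le_reg_r (Rmax 1 (ba_norm alg (mus n)))); [lra|].
  unfold Rdiv; rewrite Rmult_assoc, Rinv_l, Rmult_1_r by lra.
  rewrite (Rmult_comm (alpha n)); apply Rmult_le_compat; auto; lra.
Qed.

Lemma mixture_nonneg_ba : nonneg_ba m.
Proof.
  assert (Hn : forall A, alg A -> 0 <= m A)
    by (intros A HA; apply (series_nonneg _ _ (aterm_nonneg A HA) (m_sum A HA))).
  split; [split|]; auto.
  - intros A C HA HC HD; apply (series_unique (aterm mus alpha (setU A C))); [apply m_sum, algU; auto|].
    replace (aterm mus alpha (setU A C)) with (fun n => aterm mus alpha A n + aterm mus alpha C n).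
    + apply series_add; apply m_sum; auto.
    + apply functional_extensionality; intro n; unfold aterm; rewrite tv_add; auto.
      pose proof (Rmax_l 1 (ba_norm alg (mus n))); field; lra.
  - exists 1; intros A HA; rewrite Rabs_right by (apply Rle_ge; auto).
    apply (series_le _ _ _ _ (aterm_le_weight A HA) (m_sum A HA) alpha_sum).
Qed.

Lemma tv_le_mixture n A : 0 < alpha n -> alg A ->
  tv alg (mus n) A <= Rmax 1 (ba_norm alg (mus n)) / alpha n * m A.
Proof.
  intros Hpos HA; pose proof (Rmax_l 1 (ba_norm alg (mus n))).
  pose proof (series_term_le _ _ n (aterm_nonneg A HA) (m_sum A HA)) as Ht; unfold aterm in Ht.
  apply (Rmult_le_reg_l (alpha n / Rmax 1 (ba_norm alg (mus n)))); [apply Rdiv_lt_0_compat; lra|].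
  replace (alpha n / Rmax 1 (ba_norm alg (mus n)) * (Rmax 1 (ba_norm alg (mus n)) / alpha n * m A))
    with (m A) by (field; lra).
  replace (alpha n / Rmax 1 (ba_norm alg (mus n)) * tv alg (mus n) A)
    with (alpha n * tv alg (mus n) A / Rmax 1 (ba_norm alg (mus n))) by (field; lra).
  auto.
Qed.

Lemma mixture_tail_bound A K : alg A ->
  m A <= fsum (fun n => tv alg (mus n) A) K + (1 - fsum alpha K).
Proof.
  intros HA; pose proof (series_tail_le _ _ _ _ K (aterm_le_weight A HA) (m_sum A HA) alpha_sum).
  pose proof (fsum_le _ _ K (aterm_le_tv A HA)); lra.
Qed.

End Mixture.

Lemma convA_nonneg_ba M m : (forall mu, M mu -> is_ba alg mu) -> convA alg M m -> nonneg_ba m.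
Proof. intros HM [mus [alpha [H1 [H2 [H3 H4]]]]]; apply (mixture_nonneg_ba mus alpha); auto. Qed.

(** * L(M) is contained in the double orthogonal *)

Lemma singular_common_set lam mus e k : is_ba alg lam -> (forall n, is_ba alg (mus n)) ->
  (forall n, singular alg lam (mus n)) -> 0 < e ->
  exists B, alg B /\ tv alg lam (setC B) <= INR k * e /\ forall n, (n < k)%nat -> tv alg (mus n) B <= e.
Proof.
  intros Hlam Hmus Hs He; induction k as [|k [B [HB [HBc HBn]]]].
  - exists whole; split; [apply algT | split].
    + change (setC whole) with set0; rewrite tv_set0; auto; simpl; lra.
    + intros n Hn; inversion Hn.
  - destruct (Hs k e He) as [D [HD HDs]].
    exists (setD B D); split; [apply algD; auto | split].
    + assert (tv alg lam (setC (setD B D)) <= tv alg lam (setU (setC B) D)).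
      { apply tv_mono; auto using algC, algD, algU.
        intros x Hx; unfold setC, setD, setI, setU in *.
        destruct (classic (B x)); [right; apply NNPP; intro; apply Hx | left]; auto. }
      pose proof (tv_subadd lam (setC B) D Hlam (algC _ HB) HD).
      pose proof (tv_nonneg (mus k) (setC D) (Hmus k) (algC _ HD)); rewrite S_INR; lra.
    + intros n Hn; apply Nat.lt_succ_r, Nat.le_lteq in Hn as [Hn | ->].
      * apply Rle_trans with (tv alg (mus n) B); [|apply HBn; auto].
        apply tv_mono; auto using algD; intros x [a _]; auto.
      * eapply Rle_trans; [apply (tv_mono (mus k) (setC D)); auto using algD, algC; intros x [_ a]; auto|].
        pose proof (tv_nonneg lam D Hlam HD); lra.
Qed.

Lemma Lset_perp_perp M nu : (forall mu, M mu -> is_ba alg mu) ->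
  Lset alg M nu -> perp alg (perp alg M) nu.
Proof.
  intros HM [Hnu [m [Hm Hac]]]; split; auto; intros lam [Hlam Hs] eps He.
  pose proof (convA_nonneg_ba M m HM Hm) as Hmnn.
  destruct Hm as [mus [alpha [H1 [H2 [H3 H4]]]]].
  destruct (Hac (eps / 2)) as [delta [Hd Hdel]]; [lra|].
  set (eta := Rmin delta (eps / 2)).
  assert (Heta : 0 < eta) by (apply Rmin_pos; lra).
  destruct (series_tail_small alpha 1 (eta / 2) H3) as [K HK]; [lra|].
  pose proof (pos_INR K).
  set (e := eta / (2 * (INR K + 1))).
  assert (He' : 0 < e) by (apply Rdiv_lt_0_compat; lra).
  assert (HKe : INR K * e < eta / 2)
    by (unfold e; apply (Rmult_lt_reg_r (2 * (INR K + 1))); [lra | field_simplify; nra]).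
  destruct (singular_common_set lam mus e K Hlam (fun n => HM _ (H1 n)) (fun n => Hs _ (H1 n)) He')
    as [B [HB [HBc HBn]]].
  pose proof (mixture_tail_bound mus alpha m (fun n => HM _ (H1 n)) H2 H3 H4 B K HB).
  pose proof (fsum_bound (fun n => tv alg (mus n) B) K e HBn).
  assert (eta <= delta /\ eta <= eps / 2) as [Hed Hee] by (split; [apply Rmin_l | apply Rmin_r]).
  assert (tv alg nu B < eps / 2) by (apply Hdel; auto; rewrite tv_of_nonneg; auto; lra).
  exists B; split; auto; lra.
Qed.

(** * The double orthogonal is contained in L(M) *)

Lemma mixture_exists mus alpha : (forall n, is_ba alg (mus n)) -> (forall n, 0 <= alpha n) ->
  infinite_sum alpha 1 -> exists m, forall A, alg A -> infinite_sum (aterm mus alpha A) (m A).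
Proof.
  intros Hmus Ha Hs.
  apply (choice (fun A l => alg A -> infinite_sum (aterm mus alpha A) l)); intro A.
  destruct (classic (alg A)) as [HA | HA]; [|exists 0; tauto].
  destruct (Rseries_CV_comp (aterm mus alpha A) alpha) as [l Hl]; [| exists 1; exact Hs | exists l; auto].
  intro n; split; [apply aterm_nonneg | apply aterm_le_weight]; auto.
Qed.

Lemma singular_below_null nu L : nonneg_ba L -> (forall A, alg A -> L A <= tv alg nu A) ->
  singular alg nu L -> L whole <= 0.
Proof.
  intros HL Hle Hs; apply le_eps; intros eta He; destruct (Hs eta He) as [A [HA HAs]].
  rewrite (tv_of_nonneg L) in HAs; auto using algC.
  rewrite (additive_compl L A (ba_additive _ (proj1 HL)) HA); pose proof (Hle A HA); lra.
Qed.

Definition wF (F : list (setfun Omega)) : setfun Omega :=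
  fun A => fold_right (fun mu acc => tv alg mu A + acc) 0 F.

Lemma wF_nonneg_ba F : Forall (is_ba alg) F -> nonneg_ba (wF F).
Proof.
  induction 1 as [|mu F Hmu HF IH].
  - split; [split|]; unfold wF; simpl; [intros; ring | exists 0; intros; rewrite Rabs_R0; lra | intros; lra].
  - destruct IH as [Hb Hn]; destruct (tv_nonneg_ba mu Hmu) as [Tb Tn]; split.
    + replace (wF (mu :: F)) with (fun A => tv alg mu A - (fun C => -1 * wF F C) A)
        by (apply functional_extensionality; intro; unfold wF; simpl; ring).
      apply ba_sub, ba_scale; auto.
    + intros A HA; specialize (Tn A HA); specialize (Hn A HA); unfold wF in *; simpl; lra.
Qed.

Lemma wF_seq (mus : nat -> setfun Omega) N A :
  wF (map mus (seq 0 N)) A = fsum (fun i => tv alg (mus i) A) N.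
Proof.
  induction N; [reflexivity|].
  rewrite seq_S, map_app; unfold wF in *; rewrite fold_right_app; simpl.
  rewrite <- IHN; clear IHN; generalize (map mus (seq 0 N)); intro l.
  induction l; simpl; [ring | rewrite IHl; ring].
Qed.

Section Extremal.
Variable M : setfun Omega -> Prop.
Hypothesis HM : forall mu, M mu -> is_ba alg mu.
Variable nu : setfun Omega.
Hypothesis Hnu : is_ba alg nu.

Lemma Forall_ba F : Forall M F -> Forall (is_ba alg) F.
Proof. intro H; eapply Forall_impl; [|exact H]; auto. Qed.

Definition defect (F : list (setfun Omega)) (k : nat) : R :=
  pos_part (shifted (tv alg nu) (wF F) (INR k)) whole.

Lemma defect_nonneg F k : Forall M F -> 0 <= defect F k.
Proof.
  intros HF; apply pos_part_nonneg, algT.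
  apply shifted_ba; [apply tv_nonneg_ba | apply wF_nonneg_ba, Forall_ba]; auto.
Qed.

Variable gamma : R.
Hypothesis gamma_lower : forall F k, Forall M F -> gamma <= defect F k.
Variables (mus : nat -> setfun Omega) (m : setfun Omega).
Hypothesis mus_in : forall n, M (mus n).
Hypothesis m_sum : forall A, alg A -> infinite_sum (aterm mus geo A) (m A).
Hypothesis gamma_attained : forall eta, 0 < eta -> exists F k, Forall M F /\
  (forall mu, In mu F -> exists n, mus n = mu) /\ defect F k < gamma + eta.

Lemma mus_ba n : is_ba alg (mus n).
Proof. auto. Qed.

Lemma m_nonneg_ba : nonneg_ba m.
Proof. apply (mixture_nonneg_ba mus geo); auto using mus_ba, geo_nonneg, geo_sum. Qed.

Lemma rho_nonneg_ba : nonneg_ba (tv alg nu).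
Proof. apply tv_nonneg_ba; auto. Qed.

Lemma family_dominated F : (forall mu, In mu F -> exists n, mus n = mu) ->
  exists C, 0 <= C /\ forall A, alg A -> wF F A <= C * m A.
Proof.
  induction F as [|mu F IH]; intros HF.
  - exists 0; split; [lra|]; intros A HA; unfold wF; simpl; lra.
  - destruct IH as [C [HC HCA]]; [intros; apply HF; simpl; auto|].
    destruct (HF mu (or_introl eq_refl)) as [n <-].
    pose proof (Rmax_l 1 (ba_norm alg (mus n))); pose proof (geo_pos n).
    exists (C + Rmax 1 (ba_norm alg (mus n)) / geo n); split.
    + apply Rplus_le_le_0_compat; auto; apply Rlt_le, Rdiv_lt_0_compat; lra.
    + intros A HA; specialize (HCA A HA); unfold wF in *; simpl.
      pose proof (tv_le_mixture mus geo m mus_ba geo_nonneg m_sum n A (geo_pos n) HA); lra.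
Qed.

Lemma sing_part_mass_le : sing_part (tv alg nu) m whole <= gamma.
Proof.
  apply le_eps; intros eta He.
  destruct (gamma_attained eta He) as [F [k [HF [Hcov Hk]]]].
  destruct (family_dominated F Hcov) as [C [HC HCA]].
  assert (HFb : nonneg_ba (wF F)) by (apply wF_nonneg_ba, Forall_ba; auto).
  assert (Hd : nonneg_ba (fun A => INR k * (C * m A - wF F A))).
  { apply nonneg_ba_scale; [|apply pos_INR]; split.
    - apply (ba_sub (fun A => C * m A)); [apply ba_scale, m_nonneg_ba | apply HFb].
    - intros A HA; specialize (HCA A HA); lra. }
  assert (sing_part (tv alg nu) m whole <= defect F k); [|lra].
  apply Rle_trans with (pos_part (shifted (tv alg nu) m (INR k * C)) whole).
  - apply sing_part_le; auto using rho_nonneg_ba, m_nonneg_ba, algT.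
    apply Rmult_le_pos; auto using pos_INR.
  - unfold defect; apply (pos_part_sub_le _ _ _ _ (shifted_ba _ _ rho_nonneg_ba HFb _) Hd algT).
    intro A; unfold shifted; ring.
Qed.

Lemma gamma_le_shift mu n : M mu ->
  gamma <= pos_part (shifted (tv alg nu) (fun A => m A + tv alg mu A) (INR n)) whole.
Proof.
  intros Hmu; apply le_eps; intros eta He.
  assert (Hw : nonneg_ba (fun A => m A + tv alg mu A))
    by (apply nonneg_ba_plus; [apply m_nonneg_ba | apply tv_nonneg_ba; auto]).
  pose proof (pos_INR n).
  destruct (series_tail_small geo 1 (eta / 2 / (INR n + 1)) geo_sum) as [N HN];
    [apply Rdiv_lt_0_compat; lra|].
  pose proof (series_partial_le geo 1 N geo_nonneg geo_sum).
  assert (Htail : INR n * (1 - fsum geo N) <= eta / 2).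
  { apply (Rmult_lt_compat_l (INR n + 1)) in HN; [|lra].
    replace ((INR n + 1) * (eta / 2 / (INR n + 1))) with (eta / 2) in HN by (field; lra); nra. }
  set (L := mu :: map mus (seq 0 N)).
  assert (HL : Forall M L).
  { constructor; auto; apply Forall_forall; intros x Hx; apply in_map_iff in Hx as [i [<- _]]; auto. }
  assert (HLb : nonneg_ba (wF L)) by (apply wF_nonneg_ba, Forall_ba; auto).
  pose proof (gamma_lower L n HL) as Hg.
  destruct (pos_part_approx (shifted (tv alg nu) (wF L) (INR n)) (eta / 2)
    (shifted_ba _ _ rho_nonneg_ba HLb _)) as [C [HC HCs]]; [lra|].
  pose proof (pos_part_whole_ge _ C (shifted_ba _ _ rho_nonneg_ba Hw (INR n)) HC) as HP.
  pose proof (mixture_tail_bound mus geo m mus_ba geo_nonneg geo_sum m_sum C N HC) as Hm.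
  assert (EL : wF L C = tv alg mu C + fsum (fun i => tv alg (mus i) C) N)
    by (rewrite <- wF_seq; reflexivity).
  change (shifted (tv alg nu) (wF L) (INR n) C) with (tv alg nu C - INR n * wF L C) in HCs.
  change (shifted (tv alg nu) (fun A => m A + tv alg mu A) (INR n) C)
    with (tv alg nu C - INR n * (m C + tv alg mu C)) in HP.
  unfold defect in Hg; fold L in Hg.
  assert (INR n * m C <= INR n * (fsum (fun i => tv alg (mus i) C) N + (1 - fsum geo N)))
    by (apply Rmult_le_compat_l; auto).
  rewrite EL in HCs; rewrite !Rmult_plus_distr_l in HCs, HP, H1; lra.
Qed.

Lemma sing_part_singular_M mu : M mu -> singular alg (sing_part (tv alg nu) m) mu.
Proof.
  intros Hmu eps He.
  set (w := fun A => m A + tv alg mu A).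
  assert (Hw : nonneg_ba w) by (apply nonneg_ba_plus; [apply m_nonneg_ba | apply tv_nonneg_ba; auto]).
  assert (Heq : forall A, alg A -> sing_part (tv alg nu) w A = sing_part (tv alg nu) m A).
  { intros A HA; apply nonneg_eq_of_le; auto.
    - apply ba_additive, sing_part_nonneg_ba; auto using rho_nonneg_ba.
    - apply ba_additive, sing_part_nonneg_ba; auto using rho_nonneg_ba, m_nonneg_ba.
    - intros C HC; apply sing_part_antitone; auto using rho_nonneg_ba, m_nonneg_ba, tv_nonneg_ba.
    - pose proof sing_part_mass_le.
      assert (gamma <= sing_part (tv alg nu) w whole); [|lra].
      apply sing_part_ge; auto using rho_nonneg_ba, algT; intro n; apply gamma_le_shift; auto. }
  destruct (sing_part_singular _ _ rho_nonneg_ba Hw eps He) as [A [HA HAs]].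
  exists A; split; auto.
  rewrite tv_of_nonneg, <- Heq; auto using sing_part_nonneg_ba, rho_nonneg_ba, m_nonneg_ba.
  assert (w (setC A) = m (setC A) + tv alg mu (setC A)) by reflexivity.
  pose proof (proj2 m_nonneg_ba _ (algC A HA)); lra.
Qed.

End Extremal.

Lemma inv_succ_small eta : 0 < eta -> exists j, / (INR j + 1) < eta.
Proof.
  intros He; destruct (INR_unbounded (/ eta)) as [j Hj]; exists j.
  rewrite <- (Rinv_inv eta); apply Rinv_lt_contravar; [|lra].
  apply Rmult_lt_0_compat; [apply Rinv_0_lt_compat; auto | pose proof (pos_INR j); lra].
Qed.

Lemma defect_minimizing_sequence M nu mu0 : (forall mu, M mu -> is_ba alg mu) -> is_ba alg nu -> M mu0 ->
  exists (gamma : R) (mus : nat -> setfun Omega), (forall n, M (mus n)) /\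
    (forall F k, Forall M F -> gamma <= defect nu F k) /\
    (forall eta, 0 < eta -> exists F k, Forall M F /\
       (forall mu, In mu F -> exists n, mus n = mu) /\ defect nu F k < gamma + eta).
Proof.
  intros HM Hnu Hmu0.
  destruct (inf_approx (fun r => exists F k, Forall M F /\ r = defect nu F k)) as [gamma [Hlow Happ]].
  { exists (defect nu nil 0), nil, 0%nat; auto. }
  { intros r [F [k [HF ->]]]; apply (defect_nonneg M HM); auto. }
  destruct (choice (fun j p => Forall M (fst p) /\ defect nu (fst p) (snd p) < gamma + / (INR j + 1)))
    as [p Hp].
  { intro j; destruct (Happ (/ (INR j + 1))) as [r [[F [k [HF ->]]] Hr]].
    - apply Rinv_0_lt_compat; pose proof (pos_INR j); lra.
    - exists (F, k); auto. }
  destruct (enum_lists M mu0 (fun j => fst (p j)) Hmu0 (fun j => proj1 (Hp j))) as [mus [Hmus Hcov]].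
  exists gamma, mus; repeat split; auto.
  - intros F k HF; apply Hlow; eauto.
  - intros eta He; destruct (inv_succ_small eta He) as [j Hj]; destruct (Hp j) as [HF Hd].
    exists (fst (p j)), (snd (p j)); repeat split; eauto; lra.
Qed.

Lemma perp_perp_Lset M nu : (forall mu, M mu -> is_ba alg mu) -> (exists mu, M mu) ->
  perp alg (perp alg M) nu -> Lset alg M nu.
Proof.
  intros HM [mu0 Hmu0] [Hnu Hpp]; split; auto.
  destruct (defect_minimizing_sequence M nu mu0 HM Hnu Hmu0) as [gamma [mus [Hmus [Hlow Hatt]]]].
  destruct (mixture_exists mus geo (fun n => HM _ (Hmus n)) geo_nonneg geo_sum) as [m Hm].
  exists m; split; [exists mus, geo; repeat split; auto using geo_nonneg, geo_sum|].
  pose proof (m_nonneg_ba M HM mus m Hmus Hm) as Hmnn.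
  pose proof (tv_nonneg_ba nu Hnu) as Hrho.
  (* the part of |nu| singular to m lies in M^perp, hence is singular to nu, hence vanishes *)
  assert (Hnull : sing_part (tv alg nu) m whole <= 0).
  { apply (singular_below_null nu); [apply sing_part_nonneg_ba; auto | intros; apply sing_part_le_rho; auto |].
    apply Hpp; split; [apply sing_part_nonneg_ba; auto|].
    intros mu Hmu; apply (sing_part_singular_M M HM nu Hnu gamma Hlow mus m Hmus Hm Hatt); auto. }
  intros eps He.
  destruct (sing_part_null_abs_cont _ _ Hrho Hmnn Hnull eps He) as [delta [Hd Hdel]].
  exists delta; split; auto; intros A HA HmA.
  rewrite tv_of_nonneg in HmA; auto.
Qed.

End BoundedCharges.

Theorem mainTheorem2 (Omega : Type) (alg : set Omega -> Prop)
  (Halg : is_algebra alg) (M : setfun Omega -> Prop)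
  (HM : forall mu, M mu -> is_ba alg mu)
  (HMne : exists mu, M mu) :
  forall nu : setfun Omega,
    Lset alg M nu <-> perp alg (perp alg M) nu.
Proof.
  intros nu; split.
  - apply Lset_perp_perp; auto.
  - apply perp_perp_Lset; auto.
Qed.
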